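(* For every $n\in\mathbb{N}$, every proper subinterval of $I_{n+1}$ is a subinterval of $I_n$ or of $\ell_nI_n$.
   Context: $\mathbb{F}$ is the free group on generators $a,b$ with identity $e$. For $n=4k+i$ with $k\in\mathbb{N}$ and $0\le i<4$, set $\ell_n=a,a^{-1},b,b^{-1}$ according as $i=0,1,2,3$. For $g\in\mathbb{F}$ and $S\subseteq\mathbb{F}$ let $gS=\{gs:s\in S\}$. Define $I_0=\{e\}$ and $I_{n+1}=I_n\cup\ell_nI_n$. An interval of $\mathbb{F}$ is either the empty set or a set of the form $wI_n$ with $w\in\mathbb{F}$, $n\in\mathbb{N}$; $\mathbb{I}$ denotes the set of intervals. If $I,J\in\mathbb{I}$ and $J\subseteq I$, $J$ is a subinterval of $I$, written $J\le I$. *)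

From mathcomp Require Import all_boot.
Set Implicit Arguments. Unset Strict Implicit. Unset Printing Implicit Defensive.

(* A letter is (is_b, is_inverse): (false,false)=a, (false,true)=a^-1,
   (true,false)=b, (true,true)=b^-1. *)
Definition letter := (bool * bool)%type.
Definition la : letter := (false, false).
Definition la_inv : letter := (false, true).
Definition lb : letter := (true, false).
Definition lb_inv : letter := (true, true).
Definition linv (x : letter) : letter := (x.1, ~~ x.2).

Definition word := seq letter.

Definition push (x : letter) (w : word) : word :=
  match w with
  | y :: s => if y == linv x then s else x :: y :: s
  | [::] => [:: x]
  end.

Definition reduce (w : word) : word := foldr push [::] w.
Definition reduced (w : word) : Prop := reduce w = w.

(* Elements of F are the reduced words; e is the empty word. *)
Definition e : word := [::].
Definition fmul (u v : word) : word := reduce (u ++ v).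

Definition fset := word -> Prop.
Definition lmul (g : word) (S : fset) : fset :=
  fun x => exists2 s, S s & x = fmul g s.
Definition fsubset (S T : fset) : Prop := forall x, S x -> T x.
Definition seteq (S T : fset) : Prop := forall x, S x <-> T x.

Definition ell (n : nat) : word :=
  match n %% 4 with
  | 0 => [:: la]
  | 1 => [:: la_inv]
  | 2 => [:: lb]
  | _ => [:: lb_inv]
  end.

Fixpoint I (n : nat) : fset :=
  match n with
  | 0 => fun x => x = e
  | m.+1 => fun x => I m x \/ lmul (ell m) (I m) x
  end.

Definition is_interval (S : fset) : Prop :=
  seteq S (fun _ => False) \/
  exists w n, reduced w /\ seteq S (lmul w (I n)).

From mathcomp Require Import all_boot.
Set Implicit Arguments. Unset Strict Implicit.

(* Elements of the free group are reduced words, so the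
   Cayley graph is a tree and the geodesic from u to v passes through the
   points u·p, p a prefix of the reduced word u^-1 v.  Call a set convex if it
   contains the geodesic between any two of its points.
   The ladder L(m,k) is the set of words l_{m+k-1}^{e_{k-1}} ... l_m^{e_0}
   with e_i in {0,1}; by construction I_{m+k} = L(m,k) I_m.  Ladders are
   convex, because convexity survives left translation and the passage from
   S to S ∪ cS for a letter c.  The key rigidity fact is the converse of the
   construction: if w I_m ⊆ I_N then m <= N and w ∈ L(m, N-m).  It follows by
   induction on m: the cases w·l_m^{±1} are handled by splitting a ladder at
   its last rung, and convexity gives that a point whose two neighbours
   u·c^-1, u·c lie in a convex set lies there too.
   For the theorem, J = w I_m ⊆ I_{n+1} gives w ∈ L(m, n+1-m); the case
   m = n+1 means J = I_{n+1}, and otherwise splitting the ladder at its first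
   rung puts w either in L(m, n-m) or in l_n L(m, n-m). *)

Lemma linvK x : linv (linv x) = x.
Proof. by case: x => a b; rewrite /linv /= negbK. Qed.

Lemma letter_neq_linv x : (x == linv x) = false.
Proof. by case: x => a []; rewrite /linv /= xpair_eqE /= andbF. Qed.

Definition no_cancel (x y : letter) : bool := y != linv x.
Definition reducedb (w : word) : bool := sorted no_cancel w.

Lemma reducedb_cons x w :
  reducedb (x :: w) = (if w is y :: _ then y != linv x else true) && reducedb w.
Proof. by case: w. Qed.

Lemma reducedb_behead x w : reducedb (x :: w) -> reducedb w.
Proof. by rewrite reducedb_cons => /andP[]. Qed.

Lemma reducedb_prefix p s : reducedb (p ++ s) -> reducedb p.
Proof. by move/cat_sorted2 => []. Qed.

Lemma push_reduced x w : reducedb w -> reducedb (push x w).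
Proof.
case: w => [|y s] //= Hw.
case: eqP => E; first by case: s Hw => //= z s /andP[].
by rewrite /reducedb /= /no_cancel; apply/andP; split => //; apply/eqP.
Qed.

Lemma reduce_reduced w : reducedb (reduce w).
Proof. by elim: w => //= x w IH; apply: push_reduced. Qed.

Lemma reduce_id w : reducedb w -> reduce w = w.
Proof.
elim: w => //= x w IH Hw.
rewrite IH; last exact: reducedb_behead Hw.
by case: w Hw {IH} => //= y s /andP[/negbTE ->].
Qed.

Lemma reducedP w : reduced w <-> reducedb w.
Proof.
split; first by rewrite /reduced => <-; apply: reduce_reduced.
exact: reduce_id.
Qed.

Lemma push_cancel x z : reducedb z -> push x (push (linv x) z) = z.
Proof.
case: z => [|y z] /=; first by rewrite eqxx.
case: eqP => [|_ _]; last by rewrite /= eqxx.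
rewrite linvK => <-.
by case: z => //= c z /andP[/negbTE ->].
Qed.

Lemma foldr_push_reduced r s : reducedb r -> reducedb (foldr push r s).
Proof. by move=> Hr; elim: s => //= x s IH; apply: push_reduced. Qed.

Lemma foldr_push_reduce r u :
  reducedb r -> foldr push r (reduce u) = foldr push r u.
Proof.
move=> Hr; elim: u => //= x u <-.
case: (reduce u) => [|y s] //=.
case: eqP => [->|] //=.
by rewrite push_cancel //; apply: foldr_push_reduced.
Qed.

Lemma reduce_cat u v : reduce (u ++ v) = foldr push (reduce v) u.
Proof. by rewrite /reduce foldr_cat. Qed.

Lemma reduce_catr u v : reduce (u ++ reduce v) = reduce (u ++ v).
Proof. by rewrite !reduce_cat reduce_id //; apply: reduce_reduced. Qed.

Lemma reduce_catl u v : reduce (reduce u ++ v) = reduce (u ++ v).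
Proof. by rewrite !reduce_cat foldr_push_reduce //; apply: reduce_reduced. Qed.

Lemma fmul_reduced u v : reducedb (fmul u v).
Proof. exact: reduce_reduced. Qed.

Lemma fmulA u v w : fmul (fmul u v) w = fmul u (fmul v w).
Proof. by rewrite /fmul reduce_catl reduce_catr catA. Qed.

Lemma fmul1w w : reducedb w -> fmul e w = w.
Proof. exact: reduce_id. Qed.

Lemma fmulw1 w : reducedb w -> fmul w e = w.
Proof. by move=> Hw; rewrite /fmul cats0 reduce_id. Qed.

Lemma fmul_e_r x q : fmul x (fmul e q) = fmul x q.
Proof. by rewrite /fmul reduce_catr. Qed.

Definition winv (w : word) : word := rev (map linv w).

Lemma winvK w : winv (winv w) = w.
Proof. by rewrite /winv map_rev revK -map_comp (eq_map linvK) map_id. Qed.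

Lemma winv_cat u v : winv (u ++ v) = winv v ++ winv u.
Proof. by rewrite /winv map_cat rev_cat. Qed.

Lemma reducedb_winv w : reducedb (winv w) = reducedb w.
Proof.
rewrite /reducedb /winv rev_sorted sorted_map; apply: eq_sorted => x y.
by case: x => [[] []]; case: y => [[] []].
Qed.

Lemma fmulVw w : fmul (winv w) w = e.
Proof.
elim: w => // x w IH.
rewrite /winv /= rev_cons -cats1 -/(winv w) /fmul -catA /= reduce_cat /=.
have := push_cancel (linv x) (reduce_reduced w); rewrite linvK => ->.
by rewrite -reduce_cat.
Qed.

Lemma fmulwV w : fmul w (winv w) = e.
Proof. by rewrite -{1}(winvK w) fmulVw. Qed.

(* Inversion commutes with reduction, by uniqueness of inverses. *)
Lemma winv_reduce w : reduce (winv w) = winv (reduce w).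
Proof.
have Hr : fmul (reduce w) (reduce (winv w)) = e.
  by rewrite /fmul reduce_catl reduce_catr -/(fmul _ _) fmulwV.
rewrite -(fmul1w (reduce_reduced (winv w))) -(fmulVw (reduce w)).
by rewrite fmulA Hr fmulw1 // reducedb_winv reduce_reduced.
Qed.

Lemma winv_fmul u v : winv (fmul u v) = fmul (winv v) (winv u).
Proof. by rewrite /fmul -winv_reduce winv_cat. Qed.

Lemma fmul_letterK u c : reducedb u -> fmul (fmul u [:: c]) [:: linv c] = u.
Proof. by move=> Hu; rewrite fmulA /fmul /= eqxx -/(fmul u e) fmulw1. Qed.

(* Prefixes of a product: a prefix p of the reduced word x·y is either a
   prefix of x or x·q for a prefix q of y (the tree has unique geodesics). *)
Lemma prefix_of_product x y p s : reducedb x -> reducedb y -> fmul x y = p ++ s ->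
  (exists s', x = p ++ s') \/ (exists q s', y = q ++ s' /\ p = fmul x q).
Proof.
elim: x p s => [|a x IH] p s Hx Hy.
  rewrite fmul1w // => E; right; exists p, s; split => //.
  by rewrite fmul1w //; apply: (@reducedb_prefix p s); rewrite -E.
have Hx' := reducedb_behead Hx.
have Hfa q : fmul (a :: x) q = push a (fmul x q) by [].
rewrite Hfa; case E: (fmul x y) => [|c r] /=.
  case: p => [|a' p] /=; first by move=> _; left; exists (a :: x).
  by case=> <-; case: p => // _; left; exists x.
case: eqP => Hc.
  move=> Er; subst c.
  have := IH (linv a :: p) s Hx' Hy; rewrite E Er => /(_ erefl) [[s' Ex]|[q [s' [Ey Ep]]]].
    by move: Hx; rewrite Ex reducedb_cons /= eqxx.
  by right; exists q, s'; rewrite Hfa -Ep /= eqxx.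
case: p => [|a' p] /=; first by move=> _; left; exists (a :: x).
case=> <- {a'} Er.
have := IH p s Hx' Hy; rewrite E Er => /(_ erefl) [[s' ->]|[q [s' [Ey Ep]]]].
  by left; exists s'.
right; exists q, s'; split => //; rewrite Hfa -Ep.
by case: p Er Ep => [|c' p] //= [<- _] _; case: eqP.
Qed.

Lemma prefix_letter (c : letter) q s : [:: c] = q ++ s -> q = [::] \/ q = [:: c].
Proof. by case: q => [|c' q]; [left|case=> -> E; right; case: q E]. Qed.

Lemma lmul_monotone g S T : fsubset S T -> fsubset (lmul g S) (lmul g T).
Proof. by move=> ST x [s /ST Ts ->]; exists s. Qed.

Lemma lmul_fmul g h S : fsubset (lmul (fmul g h) S) (lmul g (lmul h S)).
Proof. by move=> x [s Ss ->]; exists (fmul h s); [exists s|rewrite fmulA]. Qed.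

(* Geodesic convexity.  between_in S u v says that S contains the geodesic
   from u to v, i.e. every u·p with p a prefix of the reduced word u^-1 v. *)

Definition between_in (S : fset) u v :=
  forall p s, fmul (winv u) v = p ++ s -> S (fmul u p).
Definition convex (S : fset) := forall u v, S u -> S v -> between_in S u v.

(* The geodesic from v to u is that from u to v traversed backwards. *)
Lemma between_sym S u v : reducedb u -> reducedb v ->
  between_in S u v -> between_in S v u.
Proof.
move=> Hu Hv Huv p s Evu.
have Hps : reducedb (p ++ s) by rewrite -Evu; apply: fmul_reduced.
have Eps : fmul p s = p ++ s by rewrite /fmul reduce_id.
have Euv : fmul (winv u) v = winv s ++ winv p.
  by rewrite -winv_cat -Evu winv_fmul winvK.
have Eu : u = fmul v (fmul p s).
  by rewrite Eps -Evu -fmulA fmulwV fmul1w.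
have := Huv _ _ Euv; rewrite Eu !fmulA fmulwV.
by rewrite fmulw1 // (reducedb_prefix Hps).
Qed.

Lemma convex_lmul S g : (forall x, S x -> reducedb x) -> convex S -> convex (lmul g S).
Proof.
move=> Sred Sconv _ _ [a Sa ->] [b Sb ->] p s E.
exists (fmul a p); last by rewrite fmulA.
apply: (Sconv a b Sa Sb p s).
by rewrite -E winv_fmul fmulA -(fmulA (winv g)) fmulVw fmul1w // Sred.
Qed.

Section ConvexUnion.
Variable S : fset.
Hypothesis S_reduced : forall x, S x -> reducedb x.
Hypothesis S_e : S e.
Hypothesis S_convex : convex S.

Lemma convex_prefix q s : S (q ++ s) -> S q.
Proof.
move=> Sqs; have Hqs := S_reduced Sqs.
have := @S_convex e (q ++ s) S_e Sqs q s.
by rewrite !fmul1w ?reduce_id //; [apply|apply: reducedb_prefix Hqs].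
Qed.

Variable c : letter.
Let T : fset := fun x => S x \/ lmul [:: c] S x.

Lemma union_prefix v q s : lmul [:: c] S v -> v = q ++ s -> T q.
Proof.
move=> [v' Sv' ->] E.
have [[s' /prefix_letter [->|->]]|[q' [s' [Ev' ->]]]] :=
  prefix_of_product (erefl : reducedb [:: c]) (S_reduced Sv') E.
- by left.
- by right; exists e.
- by right; exists q' => //; apply: (@convex_prefix q' s'); rewrite -Ev'.
Qed.

Lemma between_union_mixed u v : S u -> lmul [:: c] S v -> between_in T u v.
Proof.
move=> Su Sv p s E; have Hu := S_reduced Su.
have Hv : reducedb v by case: Sv => v' _ ->; apply: fmul_reduced.
have Hu' : reducedb (winv u) by rewrite reducedb_winv.
have [[s' Eu]|[q [s' [Ev ->]]]] := prefix_of_product Hu' Hv E.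
  by left; apply: (@S_convex u e Su S_e p s'); rewrite fmulw1 // reducedb_winv.
rewrite -fmulA fmulwV fmul1w; first exact: union_prefix Sv Ev.
by apply: (@reducedb_prefix q s'); rewrite -Ev.
Qed.

Lemma convex_union : convex T.
Proof.
have T_reduced x : T x -> reducedb x.
  by case=> [/S_reduced //|[y _ ->]]; apply: fmul_reduced.
move=> u v Tu Tv; case: Tu Tv => [Su|Su] [Sv|Sv].
- by move=> p s E; left; apply: (@S_convex u v Su Sv p s E).
- exact: between_union_mixed.
- have Hu : reducedb u by apply: T_reduced; right.
  have Hv : reducedb v by apply: T_reduced; left.
  exact: between_sym Hv Hu (between_union_mixed Sv Su).
- by move=> p s E; right; apply: (convex_lmul S_reduced S_convex Su Sv E).
Qed.

End ConvexUnion.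

Lemma convex_midpoint S c u : convex S -> reducedb u ->
  S (fmul u [:: linv c]) -> S (fmul u [:: c]) -> S u.
Proof.
move=> Sconv Hu Sl Sr.
have E : fmul (winv (fmul u [:: linv c])) (fmul u [:: c]) = [:: c] ++ [:: c].
  rewrite winv_fmul /winv /= linvK -/(winv u) fmulA -(fmulA (winv u)) fmulVw.
  by rewrite fmul_e_r /fmul /= letter_neq_linv.
by have := Sconv _ _ Sl Sr _ _ E; rewrite -{2}(linvK c) fmul_letterK.
Qed.

Lemma ell_letter m : exists c, ell m = [:: c].
Proof. by rewrite /ell; case: (m %% 4) => [|[|[|k]]]; eexists. Qed.

Fixpoint ladder (m k : nat) : fset :=
  match k with
  | 0 => fun x => x = e
  | k'.+1 => fun x => ladder m k' x \/ lmul (ell (m + k')) (ladder m k') x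
  end.

Lemma ladder_reduced m k x : ladder m k x -> reducedb x.
Proof.
elim: k x => [|k IH] x /=; first by move=> ->.
by case=> [/IH //|[s _ ->]]; apply: fmul_reduced.
Qed.

Lemma ladder_e m k : ladder m k e.
Proof. by elim: k => [|k IH] //=; left. Qed.

Lemma I_reduced n x : I n x -> reducedb x.
Proof.
elim: n x => [|n IH] x /=; first by move=> ->.
by case=> [/IH //|[s _ ->]]; apply: fmul_reduced.
Qed.

Lemma I_ladder n x : I n x <-> ladder 0 n x.
Proof.
elim: n x => [|n IH] x //=.
by split; case=> [/IH|[s /IH Hs ->]]; by [left|right; exists s].
Qed.

Lemma ladder_split_last m k x : ladder m k.+1 x ->
  ladder m.+1 k x \/ exists2 t, ladder m.+1 k t & x = fmul t (ell m).
Proof.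
elim: k x => [|k IH] x /=.
  rewrite addn0; case=> [->|[s -> ->]]; first by left.
  by right; exists e; rewrite // /fmul /= cats0; case: (ell_letter m) => c ->.
case=> [/IH [H|[t Ht ->]]|[y /IH [H|[t Ht ->]] ->]].
- by left; left.
- by right; exists t => //; left.
- by left; right; exists y => //; rewrite addSn addnS.
- right; exists (fmul (ell (m + k.+1)) t); last by rewrite fmulA.
  by right; exists t => //; rewrite addSn addnS.
Qed.

Lemma ladder_sub_I m k w : ladder m k w -> fsubset (lmul w (I m)) (I (m + k)).
Proof.
elim: k w => [|k IH] w /=.
  by move=> -> x [s Hs ->]; rewrite addn0 fmul1w //; apply: I_reduced Hs.
rewrite addnS => -[/IH H x Hx|[t /IH H ->] x Hx]; first by left; apply: H.
by right; apply: lmul_monotone H _ (lmul_fmul Hx).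
Qed.

Lemma convex_ladder m k : convex (ladder m k).
Proof.
elim: k => [|k IH]; first by move=> u v /= -> -> [|].
have [c Hc] := ell_letter (m + k).
rewrite /ladder -/ladder Hc.
by apply: convex_union => //; [apply: ladder_reduced|apply: ladder_e].
Qed.

Lemma ladder_step m k w : reducedb w ->
  ladder m k.+1 w -> ladder m k.+1 (fmul w (ell m)) -> ladder m.+1 k w.
Proof.
move=> Hw L1 L2; have [c Hc] := ell_letter m.
have Lred := @ladder_reduced m.+1 k.
case: (ladder_split_last L1) => // -[t Lt Ew].
case: (ladder_split_last L2) => [L3|[t' Lt' Ew']].
  apply: (@convex_midpoint (ladder m.+1 k) c w (@convex_ladder m.+1 k) Hw).
    by rewrite Ew Hc fmul_letterK // Lred.
  by rewrite -Hc.
have : w = t'.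
  have := congr1 (fmul^~ [:: linv c]) Ew'.
  by rewrite Hc !fmul_letterK // (Lred _ Lt').
by move=> ->.
Qed.

Lemma translate_in_I m w N : reducedb w -> fsubset (lmul w (I m)) (I N) ->
  m <= N /\ ladder m (N - m) w.
Proof.
elim: m w => [|m IH] w Hw Hsub.
  by rewrite subn0; split => //; apply/I_ladder/Hsub; exists e; rewrite ?fmulw1.
have [Hm L1] : m <= N /\ ladder m (N - m) w.
  by apply: IH => // x [s Hs ->]; apply: Hsub; exists s; [left|].
have [_ L2] : m <= N /\ ladder m (N - m) (fmul w (ell m)).
  apply: IH; first exact: fmul_reduced.
  by move=> x /lmul_fmul [y Hy ->]; apply: Hsub; exists y; [right|].
case EN: (N - m) => [|k] in L1 L2.
  by have [c Hc] := ell_letter m; move: L2; rewrite /= L1 Hc.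
split; first by rewrite -subn_gt0 EN.
by rewrite subnS EN; apply: ladder_step.
Qed.

Theorem lemma2p5 (n : nat) (J : fset) :
  is_interval J -> fsubset J (I n.+1) -> ~ seteq J (I n.+1) ->
  fsubset J (I n) \/ fsubset J (lmul (ell n) (I n)).
Proof.
case=> [HJ|[w [m [/reducedP Hw HJ]]]] Hsub Hne; first by left => x /HJ.
have [Hm L] : m <= n.+1 /\ ladder m (n.+1 - m) w.
  by apply: translate_in_I => // x /HJ /Hsub.
case: (ltnP n m) => Hnm.
  have Em : m = n.+1 by apply/eqP; rewrite eqn_leq Hm Hnm.
  move: L; rewrite Em subnn /= => Ew; subst w m; exfalso; apply: Hne => x.
  split; first by move/Hsub.
  by move=> Hx; apply/HJ; exists x; rewrite // fmul1w // (I_reduced Hx).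
have Enm : m + (n - m) = n by rewrite subnKC.
move: L; rewrite subSn //= Enm => -[L|[t Lt Ew]].
  by left => x /HJ; have := ladder_sub_I L; rewrite Enm; apply.
right => x /HJ; rewrite Ew => /lmul_fmul; apply: lmul_monotone.
by have := ladder_sub_I Lt; rewrite Enm.
Qed.
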